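(* Let $P_{XY}$ be a probability distribution on finite $\mathcal X\times\mathcal Y$ with marginals $P_X,P_Y$. Then: (1) $U(X;Y)\ge0$, with equality if and only if $P_{XY}=P_X\times P_Y$. (2) $U(X;Y)<\infty$ if and only if there exists $y\in\mathcal Y$ such that for every $x\in\mathcal X$, either $P_{Y|X}(y|x)>0$ or $P_X(x)=0$. (3) If $X-Y-Z$ is a Markov chain (with $Z$ taking values in a finite set), then $U(X;Z)\le U(X;Y)$ and $U(X;Z)\le U(Y;Z)$.
   Context: $D(P\|Q)=\sum P\log(P/Q)$ ($0\log(0/q)=0$; $+\infty$ if $P\not\ll Q$). For a joint distribution $P_{AB}$ with $A$-marginal $P_A$, the umlaut information is $U(A;B)=\min_{Q_B}D(P_A\times Q_B\|P_{AB})$ (note the asymmetry: the first argument's marginal is kept). *)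

From HB Require Import structures.
From mathcomp Require Import all_boot all_order all_algebra.
From mathcomp Require Import all_classical all_reals.
From mathcomp Require Import ereal exp.
Set Implicit Arguments. Unset Strict Implicit. Unset Printing Implicit Defensive.
Import Order.TTheory GRing.Theory Num.Theory.
Local Open Scope ring_scope.
Local Open Scope classical_set_scope.

Section Defs.
Variable R : realType.

Definition is_dist (T : finType) (p : {ffun T -> R}) : Prop :=
  (forall t, 0 <= p t) /\ \sum_(t : T) p t = 1.

Definition KL (T : finType) (p q : {ffun T -> R}) : \bar R :=
  if [exists t, (0 < p t) && (q t == 0)] then +oo%E
  else (\sum_(t | 0 < p t) p t * ln (p t / q t))%:E.

Definition margL (A B : finType) (p : {ffun A * B -> R}) : {ffun A -> R} :=
  [ffun a => \sum_(b : B) p (a, b)].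
Definition margR (A B : finType) (p : {ffun A * B -> R}) : {ffun B -> R} :=
  [ffun b => \sum_(a : A) p (a, b)].

Definition prodd (A B : finType) (pa : {ffun A -> R}) (qb : {ffun B -> R})
  : {ffun A * B -> R} := [ffun ab => pa ab.1 * qb ab.2].

Definition umlaut (A B : finType) (p : {ffun A * B -> R}) : \bar R :=
  ereal_inf [set KL (prodd (margL p) q) p | q in [set q : {ffun B -> R} | is_dist q]].

Definition margXY (X Y Z : finType) (p : {ffun X * Y * Z -> R}) : {ffun X * Y -> R} :=
  [ffun xy => \sum_(z : Z) p (xy.1, xy.2, z)].
Definition margYZ (X Y Z : finType) (p : {ffun X * Y * Z -> R}) : {ffun Y * Z -> R} :=
  [ffun yz => \sum_(x : X) p (x, yz.1, yz.2)].
Definition margXZ (X Y Z : finType) (p : {ffun X * Y * Z -> R}) : {ffun X * Z -> R} :=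
  [ffun xz => \sum_(y : Y) p (xz.1, y, xz.2)].
Definition margY3 (X Y Z : finType) (p : {ffun X * Y * Z -> R}) : {ffun Y -> R} :=
  [ffun y => \sum_(x : X) \sum_(z : Z) p (x, y, z)].

(* X - Y - Z Markov chain: P(x,y,z) P(y) = P(x,y) P(y,z), i.e. X, Z
   conditionally independent given Y *)
Definition markov3 (X Y Z : finType) (p : {ffun X * Y * Z -> R}) : Prop :=
  forall x y z, p (x, y, z) * margY3 p y = margXY p (x, y) * margYZ p (y, z).

End Defs.

From HB Require Import structures.
From mathcomp Require Import all_boot all_order all_algebra.
From mathcomp Require Import all_classical all_reals.
From mathcomp Require Import ereal exp.
From mathcomp Require Import sequences ring lra.
Import Order.TTheory GRing.Theory Num.Theory.
Local Open Scope ring_scope.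
Set Implicit Arguments. Unset Strict Implicit. Unset Printing Implicit Defensive.

(* Write D_y = D(P_X || P_XY(., y)) and w_y = exp (- D_y), with w_y = 0 when D_y
   is infinite.  Splitting the logarithm gives D(P_X x Q || P_XY) = D(Q || w) for every
   Q, so by the log-sum inequality U(X;Y) = - ln (sum_y w_y), attained at Q = w / sum w,
   and U(X;Y) = +oo when all w_y vanish; this gives (2).  The log-sum inequality also
   gives w_y <= P_Y(y), with equality exactly when P_XY(., y) = P_X P_Y(y), so
   sum_y w_y <= 1 with equality iff X and Y are independent; this gives (1).
   For (3), the Markov property makes P_XZ the image of P_XY under the kernel
   id x P_{Z|Y}, and the image of P_YZ under P_{X|Y} x id; such kernels map product
   distributions P x Q to product distributions, so the data-processing inequality
   for D yields both bounds. *)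

Lemma sum_pair (R : nmodType) (A B : finType) (F : A * B -> R) :
  \sum_t F t = \sum_a \sum_b F (a, b).
Proof. by rewrite pair_bigA; apply: eq_bigr => -[]. Qed.

Lemma sum_pair_eq1 (R : pzSemiRingType) (A B : finType) (F : A * B -> R) a :
  \sum_t (t.1 == a)%:R * F t = \sum_b F (a, b).
Proof.
rewrite sum_pair (bigD1 a) //= [X in _ + X]big1 ?addr0.
  by apply: eq_bigr => b _; rewrite eqxx mul1r.
by move=> a' /negbTE a'a; apply: big1 => b _; rewrite /= a'a mul0r.
Qed.

Lemma sum_pair_eq2 (R : pzSemiRingType) (A B : finType) (F : A * B -> R) b :
  \sum_t (t.2 == b)%:R * F t = \sum_a F (a, b).
Proof.
rewrite sum_pair; apply: eq_bigr => a _.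
rewrite (bigD1 b) //= eqxx mul1r [X in _ + X]big1 ?addr0 //.
by move=> b' /negbTE b'b; rewrite /= b'b mul0r.
Qed.

Lemma ler_sum_term (R : numDomainType) (T : finType) (F : T -> R) t :
  (forall i, 0 <= F i) -> F t <= \sum_i F i.
Proof. by move=> F0; rewrite (bigD1 t) //= lerDl sumr_ge0. Qed.

Lemma sumr_gt0_dom (R : realDomainType) (S : finType) (a b : S -> R) :
  (forall s, 0 <= b s) -> (forall s, 0 < a s -> 0 < b s) ->
  0 < \sum_s a s -> 0 < \sum_s b s.
Proof.
move=> b0 ab; apply: contraTT; rewrite -!leNgt => B0.
apply: sumr_le0 => s _; rewrite leNgt; apply/negP => /ab bs.
by have := lt_le_trans bs (ler_sum_term s b0); rewrite ltNge B0.
Qed.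

Section Distributions.
Variable R : realType.

Definition push (S T : finType) (p : {ffun S -> R}) (K : S -> T -> R) : {ffun T -> R} :=
  [ffun t => \sum_s p s * K s t].

Lemma is_dist_push (S T : finType) (q : {ffun S -> R}) (K : S -> T -> R) :
  is_dist q -> (forall s t, 0 <= K s t) -> (forall s, 0 < q s -> \sum_t K s t = 1) ->
  is_dist (push q K).
Proof.
move=> [q0 q1] K0 K1; split=> [t|].
  by rewrite ffunE sumr_ge0 // => s _; rewrite mulr_ge0.
rewrite -q1; under eq_bigr do rewrite ffunE; rewrite exchange_big; apply: eq_bigr => s _.
have [->|qs] := eqVneq (q s) 0; first by rewrite big1 // => t _; rewrite mul0r.
by rewrite -mulr_sumr K1 ?mulr1 // lt0r qs q0.
Qed.

Lemma dist_has_pos (T : finType) (q : {ffun T -> R}) :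
  is_dist q -> exists t, 0 < q t.
Proof.
move=> [q0 q1]; have [|t /andP [_ qt]] := psumr_neq0P (P := xpredT) (fun t _ => q0 t).
  by rewrite q1; apply/eqP; exact: oner_neq0.
by exists t.
Qed.

Section Marginals.
Variables (A B : finType) (p : {ffun A * B -> R}).
Hypothesis p_ge0 : forall t, 0 <= p t.

Lemma le_margL a b : p (a, b) <= margL p a.
Proof. by rewrite ffunE; apply: (ler_sum_term (F := fun b => p (a, b))) => ?; exact: p_ge0. Qed.

Lemma le_margR a b : p (a, b) <= margR p b.
Proof. by rewrite ffunE; apply: (ler_sum_term (F := fun a => p (a, b))) => ?; exact: p_ge0. Qed.

End Marginals.

Section DistMarginals.
Variables (A B : finType) (p : {ffun A * B -> R}).
Hypothesis p_dist : is_dist p.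

Lemma is_dist_margL : is_dist (margL p).
Proof.
split=> [a|]; first by rewrite ffunE sumr_ge0 // => b _; exact: p_dist.1.
by case: p_dist => _ <-; rewrite sum_pair; apply: eq_bigr => a _; rewrite ffunE.
Qed.

Lemma is_dist_margR : is_dist (margR p).
Proof.
split=> [b|]; first by rewrite ffunE sumr_ge0 // => a _; exact: p_dist.1.
case: p_dist => _ <-; rewrite sum_pair exchange_big.
by apply: eq_bigr => b _; rewrite ffunE.
Qed.

End DistMarginals.

End Distributions.

Section KullbackLeibler.
Variable R : realType.

Lemma ln_lt_subr1 (t : R) : 0 < t -> t != 1 -> ln t < t - 1.
Proof.
move=> t0 t1; have := @expR_gt1Dx R (ln t); rewrite lnK ?posrE // ln_eq0 // t1.
by move=> /(_ isT); lra.
Qed.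

Lemma subr_lt_mul_ln_div (a b : R) : 0 <= a -> 0 < b -> a != b ->
  a - b < a * ln (a / b).
Proof.
move=> a0 b0 ab; have [->|an0] := eqVneq a 0; first by rewrite mul0r; lra.
have ap : 0 < a by rewrite lt_def an0.
have t0 : 0 < b / a by rewrite divr_gt0.
have t1 : b / a != 1 by rewrite -[1](@divff _ a) // (can_eq (divfK an0)) eq_sym.
have := ln_lt_subr1 t0 t1; rewrite -invf_div lnV ?posrE ?divr_gt0 // => h.
have -> : a - b = a * (1 - b / a) by field.
by rewrite ltr_pM2l //; lra.
Qed.

Lemma subr_le_mul_ln_div (a b : R) : 0 <= a -> 0 < b -> a - b <= a * ln (a / b).
Proof.
move=> a0 b0; have [->|ab] := eqVneq a b; last exact/ltW/subr_lt_mul_ln_div.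
by rewrite divff ?gt_eqF // ln1 mulr0 subrr.
Qed.

Section LogSum.
Variables (S : finType) (a b : S -> R).
Hypotheses (a_ge0 : forall s, 0 <= a s) (b_ge0 : forall s, 0 <= b s).
Hypothesis ab_pos : forall s, 0 < a s -> 0 < b s.

Let A := \sum_s a s.
Let B := \sum_s b s.
Let B_gt0 : 0 < A -> 0 < B := sumr_gt0_dom b_ge0 ab_pos.
(* The slack in [a ln (a / (r b)) >= a - r b] at r = A / B; the right-hand sides
   sum to zero, which is the whole log-sum inequality. *)
Let gap s := a s * ln (a s / b s) - a s * ln (A / B) - (a s - A / B * b s).

Let gap_ge0 s : 0 < A -> 0 <= gap s /\ (gap s = 0 -> a s = A / B * b s).
Proof.
move=> A0; have r0 : 0 < A / B by rewrite divr_gt0 ?B_gt0.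
have [bs0|bs0] := eqVneq (b s) 0.
  have as0 : a s = 0.
    by apply/le_anti; rewrite a_ge0 andbT leNgt; apply/negP => /ab_pos; rewrite bs0 ltxx.
  by rewrite /gap as0 bs0 !(mul0r, mulr0) !subrr.
have bs : 0 < b s by rewrite lt_def bs0 b_ge0.
have rbs : 0 < A / B * b s by rewrite mulr_gt0.
have -> : gap s = a s * ln (a s / (A / B * b s)) - (a s - A / B * b s).
  rewrite /gap; congr (_ - _).
  have [->|as0] := eqVneq (a s) 0; first by rewrite !mul0r subrr.
  have asp : 0 < a s by rewrite lt_def as0 a_ge0.
  rewrite -mulrBr -ln_div ?posrE ?divr_gt0 ?B_gt0 //.
  suff -> : a s / b s / (A / B) = a s / (A / B * b s) by [].
  by rewrite mulrAC [in RHS]invfM mulrA.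
split; first by rewrite subr_ge0 subr_le_mul_ln_div.
have [//|ne] := eqVneq (a s) (A / B * b s).
by have := subr_lt_mul_ln_div (a_ge0 s) rbs ne; lra.
Qed.

Let sum_gap : 0 < A -> \sum_s gap s = \sum_s a s * ln (a s / b s) - A * ln (A / B).
Proof.
move=> A0; rewrite !sumrB -!mulr_suml -mulr_sumr -/A -/B divfK ?gt_eqF ?B_gt0 //.
by rewrite subrr subr0.
Qed.

Lemma logsum_le : A * ln (A / B) <= \sum_s a s * ln (a s / b s).
Proof.
have [A0|A0] := leP A 0.
  have {}A0 : A = 0 by apply/le_anti; rewrite A0 sumr_ge0.
  have a0 s : a s = 0 by exact: (psumr_eq0P (P := xpredT)).
  by rewrite A0 mul0r big1 // => s _; rewrite a0 mul0r.
by rewrite -subr_ge0 -sum_gap // sumr_ge0 // => s _; case: (gap_ge0 s A0).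
Qed.

Lemma logsum_eq : 0 < A -> A * ln (A / B) = \sum_s a s * ln (a s / b s) ->
  forall s, a s = A / B * b s.
Proof.
move=> A0 eq_sum s; apply: (gap_ge0 s A0).2.
have gap0 : \sum_s gap s = 0 by rewrite sum_gap // eq_sum subrr.
exact: (psumr_eq0P (fun i _ => (gap_ge0 i A0).1) gap0).
Qed.

End LogSum.

Lemma KL_pinfty (T : finType) (p q : {ffun T -> R}) t :
  0 < p t -> q t = 0 -> KL p q = +oo%E.
Proof. by move=> pt qt; rewrite /KL ifT //; apply/existsP; exists t; rewrite pt qt eqxx. Qed.

Lemma KLE (T : finType) (p q : {ffun T -> R}) :
  (forall t, 0 <= p t) -> (forall t, 0 < p t -> q t != 0) ->
  KL p q = (\sum_t p t * ln (p t / q t))%:E.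
Proof.
move=> p0 pq; rewrite /KL ifF; last first.
  by apply/negbTE/existsP => -[t /andP [/pq /negbTE ->]].
congr (_%:E); rewrite big_mkcond; apply: eq_bigr => t _; case: ifPn => // pt.
by rewrite (_ : p t = 0) ?mul0r //; apply/le_anti; rewrite p0 andbT leNgt.
Qed.

Lemma KL_lt_pinfty (T : finType) (p q : {ffun T -> R}) :
  (KL p q < +oo)%E = [forall t, (0 < p t) ==> (q t != 0)].
Proof.
rewrite /KL; case: ifPn => [|/existsPn pq]; last first.
  by rewrite ltry; apply/esym/forallP => t; have := pq t; rewrite negb_and -implybE.
move=> /existsP [t /andP [pt /eqP qt]]; rewrite ltxx; apply/esym/forallP => /(_ t).
by rewrite pt qt eqxx.
Qed.

Lemma KL_abs_cont (T : finType) (p q : {ffun T -> R}) : (forall t, 0 <= q t) ->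
  KL p q != +oo%E -> forall t, 0 < p t -> 0 < q t.
Proof.
move=> q0; rewrite -ltey KL_lt_pinfty => /forallP pq t pt.
by rewrite lt0r (implyP (pq t) pt) q0.
Qed.

Lemma KL_ge_logsum (T : finType) (p q : {ffun T -> R}) :
  (forall t, 0 <= p t) -> (forall t, 0 <= q t) ->
  (((\sum_t p t) * ln ((\sum_t p t) / \sum_t q t))%:E <= KL p q)%E.
Proof.
move=> p0 q0; have [->|/(KL_abs_cont q0) pq_pos] := eqVneq (KL p q) +oo%E.
  exact: leey.
rewrite KLE // => [|t /pq_pos /gt_eqF -> //].
by rewrite lee_fin logsum_le.
Qed.

Lemma KL_self (T : finType) (p : {ffun T -> R}) : (forall t, 0 <= p t) -> KL p p = 0%E.
Proof.
move=> p0; rewrite KLE //; last by move=> t /gt_eqF ->.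
rewrite big1 // => t _.
by have [->|pt] := eqVneq (p t) 0; rewrite ?mul0r // divff // ln1 mulr0.
Qed.

Lemma KL_scale (T : finType) (q : {ffun T -> R}) (c : R) :
  (forall t, 0 <= q t) -> 0 < c ->
  KL [ffun t => c * q t] q = ((c * \sum_t q t) * ln c)%:E.
Proof.
move=> q0 c0; have cq0 t : 0 <= [ffun t => c * q t] t by rewrite ffunE mulr_ge0 // ltW.
rewrite KLE // => [|t]; last by rewrite ffunE pmulr_rgt0 // => /gt_eqF ->.
congr (_%:E); rewrite mulr_sumr mulr_suml; apply: eq_bigr => t _; rewrite ffunE.
by have [->|qt] := eqVneq (q t) 0; rewrite ?mulr0 ?mul0r // mulfK.
Qed.

Lemma KL_push_le (S T : finType) (p q : {ffun S -> R}) (K : S -> T -> R) :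
  (forall s, 0 <= p s) -> (forall s, 0 <= q s) -> (forall s t, 0 <= K s t) ->
  (forall s, 0 < p s -> 0 < q s -> \sum_t K s t = 1) ->
  (KL (push p K) (push q K) <= KL p q)%E.
Proof.
move=> p0 q0 K0 K1; have [->|/(KL_abs_cont q0) pq_pos] := eqVneq (KL p q) +oo%E.
  exact: leey.
have pK0 s t : 0 <= p s * K s t by rewrite mulr_ge0.
have qK0 s t : 0 <= q s * K s t by rewrite mulr_ge0.
have pqK s t : 0 < p s * K s t -> 0 < q s * K s t.
  rewrite !lt0r !mulf_eq0 !negb_or => /andP [/andP [ps Kst] _].
  by rewrite Kst (gt_eqF (pq_pos _ _)) ?mulr_ge0 // lt0r ps p0.
have push0 (r : {ffun S -> R}) : (forall s, 0 <= r s) -> forall t, 0 <= push r K t.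
  by move=> r0 t; rewrite ffunE sumr_ge0 // => s _; rewrite mulr_ge0.
have push_pq t : 0 < push p K t -> push q K t != 0.
  by rewrite !ffunE => /(sumr_gt0_dom (qK0^~ t) (pqK^~ t)) /gt_eqF ->.
have split_by_K : \sum_s p s * ln (p s / q s) =
    \sum_t \sum_s p s * K s t * ln (p s * K s t / (q s * K s t)).
  rewrite exchange_big; apply: eq_bigr => s _.
  have [->|ps] := eqVneq (p s) 0; first by rewrite mul0r big1 // => t _; rewrite !mul0r.
  have psp : 0 < p s by rewrite lt0r ps p0.
  rewrite -(mulr1 (p s * _)) -(K1 s psp (pq_pos s psp)) mulr_sumr; apply: eq_bigr => t _.
  have [->|Kst] := eqVneq (K s t) 0; first by rewrite !mulr0 mul0r.
  by rewrite -mulf_div divff // mulr1 mulrAC.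
rewrite (KLE (push0 _ p0) push_pq) (KLE p0) => [|s /pq_pos /gt_eqF -> //].
rewrite lee_fin split_by_K; apply: ler_sum => t _; rewrite !ffunE.
exact: (logsum_le (pK0^~ t) (qK0^~ t) (pqK^~ t)).
Qed.

End KullbackLeibler.

Section ClosedForm.
Variables (R : realType) (X Y : finType) (p : {ffun X * Y -> R}).
Hypothesis p_dist : is_dist p.

Let P := margL p.
Let P_ge0 x : 0 <= P x := (is_dist_margL p_dist).1 x.

Definition column y : {ffun X -> R} := [ffun x => p (x, y)].

Lemma columnE y x : column y x = p (x, y). Proof. by rewrite ffunE. Qed.

Lemma column_ge0 y x : 0 <= column y x.
Proof. by rewrite columnE p_dist.1. Qed.

Lemma sum_column y : \sum_x column y x = margR p y.
Proof. by rewrite ffunE; apply: eq_bigr => x _; rewrite columnE. Qed.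

Definition umlaut_weight : {ffun Y -> R} :=
  [ffun y => if KL P (column y) is r%:E then expR (- r) else 0].

Let w := umlaut_weight.

Lemma umlaut_weight_ge0 y : 0 <= w y.
Proof. by rewrite ffunE /KL; case: ifP => _ //; rewrite expR_ge0. Qed.

Lemma umlaut_weight_gt0 y : (0 < w y) = [forall x, (0 < P x) ==> (p (x, y) != 0)].
Proof.
under eq_forallb do rewrite -[p (_, y)](ffunE (fun x => p (x, y))).
by rewrite -KL_lt_pinfty ffunE /KL; case: ifP => _; rewrite ?ltxx ?expR_gt0 ?ltry.
Qed.

Lemma column_gt0 x y : 0 < w y -> 0 < P x -> 0 < p (x, y).
Proof.
rewrite umlaut_weight_gt0 => /forallP /(_ x) /implyP pxy /pxy pxy0.
by rewrite lt0r pxy0 p_dist.1.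
Qed.

Lemma KL_columnE y : 0 < w y ->
  KL P (column y) = (\sum_x P x * ln (P x / p (x, y)))%:E.
Proof.
rewrite umlaut_weight_gt0 => /forallP pxy; rewrite KLE // => [|x /(implyP (pxy x))].
  by under eq_bigr do rewrite columnE.
by rewrite columnE.
Qed.

Lemma umlaut_weightE y : 0 < w y -> w y = expR (- \sum_x P x * ln (P x / p (x, y))).
Proof. by move=> wy; rewrite ffunE KL_columnE. Qed.

Lemma KL_prodd_weight (Q : {ffun Y -> R}) : (forall y, 0 <= Q y) ->
  KL (prodd P Q) p = KL Q w.
Proof.
move=> Q0; have PQ0 t : 0 <= prodd P Q t by rewrite ffunE mulr_ge0.
case: (boolP [forall y, (0 < Q y) ==> (0 < w y)]) => [/forallP Qw|]; last first.
  rewrite negb_forall => /existsP [y]; rewrite negb_imply => /andP [Qy wy].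
  have w0 : w y = 0 by apply/le_anti; rewrite umlaut_weight_ge0 andbT leNgt.
  move: wy; rewrite umlaut_weight_gt0 negb_forall => /existsP [x].
  rewrite negb_imply negbK => /andP [Px /eqP pxy].
  by rewrite (KL_pinfty (t := y) Qy w0) (KL_pinfty (t := (x, y))) // ffunE mulr_gt0.
have {}Qw y : 0 < Q y -> 0 < w y by move=> Qy; have := Qw y; rewrite Qy.
rewrite (KLE Q0) => [|y /Qw /gt_eqF -> //].
rewrite KLE // => [|[x y]]; last first.
  rewrite ffunE /= lt0r mulf_eq0 negb_or => /andP [/andP [Px Qy] _].
  have Px' : 0 < P x by rewrite lt0r Px P_ge0.
  by rewrite gt_eqF // column_gt0 // Qw // lt0r Qy Q0.
congr (_%:E); rewrite sum_pair exchange_big; apply: eq_bigr => y _.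
have [Qy0|Qy0] := eqVneq (Q y) 0.
  by rewrite Qy0 mul0r big1 // => x _; rewrite ffunE /= Qy0 mulr0 mul0r.
have wy : 0 < w y by rewrite Qw // lt0r Qy0 Q0.
have Qy : 0 < Q y by rewrite lt0r Qy0 Q0.
rewrite (umlaut_weightE wy); set D := \sum_x _.
rewrite ln_div ?posrE ?expR_gt0 // expRK opprK.
transitivity (\sum_x Q y * (P x * ln (Q y) + P x * ln (P x / p (x, y)))).
  apply: eq_bigr => x _; rewrite ffunE /=.
  have [->|Px0] := eqVneq (P x) 0; first by rewrite !mul0r addr0 mulr0.
  have Px : 0 < P x by rewrite lt0r Px0 P_ge0.
  by rewrite [P x * Q y]mulrC -!mulrA -mulrDr -lnM ?posrE ?divr_gt0 ?column_gt0.
by rewrite -mulr_sumr big_split /= -mulr_suml (is_dist_margL p_dist).2 mul1r.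
Qed.

Let Z := \sum_y w y.

Lemma umlautE : umlaut p = if 0 < Z then (- ln Z)%:E else +oo%E.
Proof.
apply/le_anti/andP; split.
  case: ifPn => [Z0|_]; last exact: leey.
  have Q_dist : is_dist [ffun y => Z^-1 * w y].
    split=> [y|]; first by rewrite ffunE mulr_ge0 ?invr_ge0 ?umlaut_weight_ge0 ?ltW.
    by under eq_bigr do rewrite ffunE; rewrite -mulr_sumr mulVf ?gt_eqF.
  apply: ge_ereal_inf; exists (KL (prodd P [ffun y => Z^-1 * w y]) p).
    by exists [ffun y => Z^-1 * w y].
  rewrite KL_prodd_weight; last exact: Q_dist.1.
  rewrite KL_scale ?invr_gt0 ?mulVf ?gt_eqF //; last exact: umlaut_weight_ge0.
  by rewrite lee_fin mul1r lnV.
apply: le_ereal_inf_tmp => _ [Q [Q0 Q1] <-]; rewrite KL_prodd_weight //.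
case: ifPn => [Z0|]; last first.
  rewrite -leNgt => Z0; have [y Qy] := dist_has_pos (conj Q0 Q1).
  have {}Z0 : Z = 0 by apply/le_anti; rewrite Z0 sumr_ge0 // => i _; exact: umlaut_weight_ge0.
  have w0 : w y = 0 by apply: (psumr_eq0P (P := xpredT)) => // i _; exact: umlaut_weight_ge0.
  by rewrite (KL_pinfty Qy w0).
apply: le_trans (KL_ge_logsum Q0 umlaut_weight_ge0).
by rewrite Q1 mul1r div1r lnV.
Qed.

Lemma umlaut_weight_le y : w y <= margR p y.
Proof.
have [wy|] := ltP 0 (w y); last by move/le_trans; apply; rewrite (is_dist_margR p_dist).1.
have P1 := (is_dist_margL p_dist).2; rewrite -/P in P1.
have my : 0 < margR p y.
  rewrite -sum_column; apply: (sumr_gt0_dom (a := P) (column_ge0 y)); last by rewrite P1.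
  by move=> x /(column_gt0 wy); rewrite columnE.
have := KL_ge_logsum P_ge0 (column_ge0 y); rewrite KL_columnE // lee_fin P1 sum_column.
rewrite mul1r div1r lnV ?posrE // umlaut_weightE // -{2}[margR p y]lnK ?posrE //.
by rewrite ler_expR lerNl.
Qed.

Lemma sum_umlaut_weight_le1 : Z <= 1.
Proof. by rewrite -(is_dist_margR p_dist).2; apply: ler_sum => y _; apply: umlaut_weight_le. Qed.

Lemma sum_umlaut_weight_eq1 : Z = 1 -> p = prodd P (margR p).
Proof.
move=> Z1; have m_dist := is_dist_margR p_dist.
have w_eq y : w y = margR p y.
  have gap0 : \sum_y (margR p y - w y) = 0 by rewrite sumrB m_dist.2 -/Z Z1 subrr.
  have gap_ge0 i : 0 <= margR p i - w i by rewrite subr_ge0 umlaut_weight_le.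
  apply/eqP; rewrite eq_sym -subr_eq0; apply/eqP.
  exact: (psumr_eq0P (fun i _ => gap_ge0 i) gap0).
apply/ffunP => -[x y]; rewrite ffunE /=.
have [my0|my] := eqVneq (margR p y) 0.
  rewrite my0 mulr0; apply/le_anti; rewrite p_dist.1 andbT -my0 -sum_column.
  by rewrite -columnE ler_sum_term // => i; exact: column_ge0.
have wy : 0 < w y by rewrite w_eq lt0r my m_dist.1.
have P1 := (is_dist_margL p_dist).2; rewrite -/P in P1.
have abs_cont i : 0 < P i -> 0 < column y i by rewrite columnE; exact: column_gt0.
have := logsum_eq P_ge0 (column_ge0 y) abs_cont _ _ x.
rewrite P1 sum_column columnE div1r => -> //; last first.
  have eD : - \sum_x P x * ln (P x / p (x, y)) = ln (margR p y).
    by rewrite -w_eq umlaut_weightE // expRK.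
  under eq_bigr do rewrite columnE.
  by rewrite mul1r lnV ?posrE -?eD ?opprK // lt0r my m_dist.1.
by rewrite mulrAC mulVf // mul1r.
Qed.

Lemma umlaut_ge0 : (0 <= umlaut p)%E.
Proof.
rewrite umlautE; case: ifPn => [Z0|_]; last exact: leey.
by rewrite lee_fin oppr_ge0 ln_le0 // sum_umlaut_weight_le1.
Qed.

Lemma umlaut_eq0 : umlaut p = 0%E <-> p = prodd P (margR p).
Proof.
split=> [|indep].
  rewrite umlautE; case: ifPn => // Z0 /eqP; rewrite eqe oppr_eq0 ln_eq0 // => /eqP.
  exact: sum_umlaut_weight_eq1.
apply/le_anti; rewrite umlaut_ge0 andbT; apply: ge_ereal_inf.
exists (KL (prodd P (margR p)) p); first by exists (margR p) => //; exact: is_dist_margR.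
by rewrite -indep KL_self //; exact: p_dist.1.
Qed.

Lemma umlaut_lt_pinfty :
  (umlaut p < +oo)%E <-> exists y, [forall x, (0 < P x) ==> (p (x, y) != 0)].
Proof.
rewrite umlautE; case: ifPn => Z0.
  split=> [_|]; last by rewrite ltry.
  have [|y /andP [_ wy]] := psumr_neq0P (P := xpredT) (fun y _ => umlaut_weight_ge0 y).
    exact/eqP/lt0r_neq0.
  by exists y; rewrite -umlaut_weight_gt0.
rewrite ltxx; split=> // -[y]; rewrite -umlaut_weight_gt0 => wy; move: Z0.
by rewrite (lt_le_trans wy) // /Z ler_sum_term // => i; exact: umlaut_weight_ge0.
Qed.

End ClosedForm.

Section ProcessSecond.
Variables (R : realType) (A B C : finType) (K : B -> C -> R).
Hypothesis K_ge0 : forall b c, 0 <= K b c.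

Definition kprodR (ab : A * B) (ac : A * C) : R := (ab.1 == ac.1)%:R * K ab.2 ac.2.

Lemma push_kprodRE (p : {ffun A * B -> R}) a c :
  push p kprodR (a, c) = \sum_b p (a, b) * K b c.
Proof. by rewrite ffunE; under eq_bigr do rewrite mulrCA; rewrite sum_pair_eq1. Qed.

Lemma sum_kprodR ab : \sum_ac kprodR ab ac = \sum_c K ab.2 c.
Proof. by under eq_bigr do rewrite /kprodR eq_sym; rewrite sum_pair_eq1. Qed.

Lemma push_prodd_kprodR (P : {ffun A -> R}) (Q : {ffun B -> R}) :
  push (prodd P Q) kprodR = prodd P (push Q K).
Proof.
apply/ffunP => -[a c]; rewrite push_kprodRE !ffunE /= mulr_sumr.
by apply: eq_bigr => b _; rewrite ffunE mulrA.
Qed.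

Section Supported.
Variable p : {ffun A * B -> R}.
Hypothesis p_dist : is_dist p.
Hypothesis K_sum1 : forall b, 0 < margR p b -> \sum_c K b c = 1.

Let p_ge0 : forall t, 0 <= p t := p_dist.1.
Let margR_gt0 a b : 0 < p (a, b) -> 0 < margR p b.
Proof. by move=> pab; apply: lt_le_trans pab (le_margR p_ge0 a b). Qed.

Lemma margL_push_kprodR : margL (push p kprodR) = margL p.
Proof.
apply/ffunP => a; rewrite !ffunE; under eq_bigr do rewrite push_kprodRE.
rewrite exchange_big; apply: eq_bigr => b _.
have [->|pab] := eqVneq (p (a, b)) 0; first by rewrite big1 // => c _; rewrite mul0r.
by rewrite -mulr_sumr K_sum1 ?mulr1 // (@margR_gt0 a) // lt0r pab p_ge0.
Qed.

Lemma umlaut_push_kprodR : (umlaut (push p kprodR) <= umlaut p)%E.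
Proof.
apply: le_ereal_inf_tmp => _ [Q Q_dist <-].
have [->|fin] := eqVneq (KL (prodd (margL p) Q) p) +oo%E; first exact: leey.
(* Finiteness confines Q to the support of P_B, where K is stochastic. *)
have Q_supp b : 0 < Q b -> 0 < margR p b.
  have [a Pa] := dist_has_pos (is_dist_margL p_dist).
  move=> Qb; apply: (@margR_gt0 a); apply: (KL_abs_cont p_ge0 fin).
  by rewrite ffunE mulr_gt0.
apply: ge_ereal_inf; exists (KL (prodd (margL p) (push Q K)) (push p kprodR)).
  exists (push Q K); last by rewrite margL_push_kprodR.
  by apply: is_dist_push => // b /Q_supp /K_sum1.
rewrite -push_prodd_kprodR; apply: KL_push_le => // [t|s t|s _ ps].
- by rewrite ffunE mulr_ge0 // ?(is_dist_margL p_dist).1 ?Q_dist.1.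
- by rewrite mulr_ge0.
- by rewrite sum_kprodR K_sum1 //; case: s ps => a b; exact: margR_gt0.
Qed.

End Supported.
End ProcessSecond.

Section ProcessFirst.
Variables (R : realType) (A A' C : finType) (L : A -> A' -> R).
Hypothesis L_ge0 : forall a a', 0 <= L a a'.

Definition kprodL (ac : A * C) (a'c : A' * C) : R := (ac.2 == a'c.2)%:R * L ac.1 a'c.1.

Lemma push_kprodLE (p : {ffun A * C -> R}) a' c :
  push p kprodL (a', c) = \sum_a p (a, c) * L a a'.
Proof. by rewrite ffunE; under eq_bigr do rewrite mulrCA; rewrite sum_pair_eq2. Qed.

Lemma sum_kprodL ac : \sum_a'c kprodL ac a'c = \sum_a' L ac.1 a'.
Proof. by under eq_bigr do rewrite /kprodL eq_sym; rewrite sum_pair_eq2. Qed.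

Lemma push_prodd_kprodL (P : {ffun A -> R}) (Q : {ffun C -> R}) :
  push (prodd P Q) kprodL = prodd (push P L) Q.
Proof.
apply/ffunP => -[a' c]; rewrite push_kprodLE !ffunE /= mulr_suml.
by apply: eq_bigr => a _; rewrite ffunE mulrAC.
Qed.

Lemma margL_push_kprodL (p : {ffun A * C -> R}) : margL (push p kprodL) = push (margL p) L.
Proof.
apply/ffunP => a'; rewrite !ffunE; under eq_bigr do rewrite push_kprodLE.
by rewrite exchange_big; apply: eq_bigr => a _; rewrite ffunE mulr_suml.
Qed.

Lemma umlaut_push_kprodL (p : {ffun A * C -> R}) : (forall t, 0 <= p t) ->
  (forall a, 0 < margL p a -> \sum_a' L a a' = 1) -> (umlaut (push p kprodL) <= umlaut p)%E.
Proof.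
move=> p_ge0 L_sum1; apply: le_ereal_inf_tmp => _ [Q Q_dist <-].
apply: ge_ereal_inf; exists (KL (prodd (margL (push p kprodL)) Q) (push p kprodL)).
  by exists Q.
rewrite margL_push_kprodL -push_prodd_kprodL; apply: KL_push_le => // [t|s t|s Ps _].
- by rewrite !ffunE mulr_ge0 ?Q_dist.1 // sumr_ge0.
- by rewrite mulr_ge0.
- rewrite sum_kprodL L_sum1 //; move: Ps; rewrite ffunE lt0r mulf_eq0 negb_or.
  by move=> /andP [/andP [Pn0 _] _]; rewrite lt0r Pn0 ffunE sumr_ge0.
Qed.

End ProcessFirst.

Section Markov.
Variables (R : realType) (X Y Z : finType) (p : {ffun X * Y * Z -> R}).
Hypotheses (p_dist : is_dist p) (p_markov : markov3 p).

Let m := margY3 p.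
Let p_ge0 : forall t, 0 <= p t := p_dist.1.

Lemma margXY_margL : margXY p = margL p.
Proof. by apply/ffunP => -[x y]; rewrite !ffunE. Qed.

Lemma margXY_ge0 t : 0 <= margXY p t.
Proof. by rewrite margXY_margL; exact: (is_dist_margL p_dist).1. Qed.

Lemma margYZ_ge0 t : 0 <= margYZ p t.
Proof. by rewrite ffunE sumr_ge0 // => x _; exact: p_ge0. Qed.

Lemma margR_margXY : margR (margXY p) = m.
Proof. by apply/ffunP => y; rewrite !ffunE; apply: eq_bigr => x _; rewrite ffunE. Qed.

Lemma margL_margYZ : margL (margYZ p) = m.
Proof.
apply/ffunP => y; rewrite !ffunE exchange_big.
by apply: eq_bigr => z _; rewrite ffunE.
Qed.

Lemma margY3_ge0 y : 0 <= m y.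
Proof. by rewrite -margL_margYZ ffunE sumr_ge0 // => z _; exact: margYZ_ge0. Qed.

Lemma le_margY3 x y z : p (x, y, z) <= m y.
Proof.
apply: le_trans (le_margL p_ge0 (x, y) z) _; rewrite -margXY_margL -margR_margXY.
exact: le_margR (margXY_ge0) x y.
Qed.

Lemma markov_margXZ x z :
  margXZ p (x, z) = \sum_y margXY p (x, y) * (margYZ p (y, z) / m y).
Proof.
rewrite ffunE; apply: eq_bigr => y _ /=.
have [my0|my0] := eqVneq (m y) 0.
  by rewrite my0 invr0 !mulr0; apply/le_anti; rewrite p_ge0 -my0 le_margY3.
by rewrite mulrA -p_markov mulfK.
Qed.

Lemma umlautXZ_le_XY : (umlaut (margXZ p) <= umlaut (margXY p))%E.
Proof.
set K := fun y z => margYZ p (y, z) / m y.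
have -> : margXZ p = push (margXY p) (kprodR K).
  by apply/ffunP => -[x z]; rewrite push_kprodRE markov_margXZ.
apply: umlaut_push_kprodR => [y z||y].
- by rewrite /K divr_ge0 ?margYZ_ge0 ?margY3_ge0.
- by rewrite margXY_margL; exact: is_dist_margL.
- rewrite margR_margXY => my; rewrite -mulr_suml.
  have <- : margL (margYZ p) y = \sum_z margYZ p (y, z) by rewrite ffunE.
  by rewrite margL_margYZ divff ?gt_eqF.
Qed.

Lemma umlautXZ_le_YZ : (umlaut (margXZ p) <= umlaut (margYZ p))%E.
Proof.
set L := fun y x => margXY p (x, y) / m y.
have -> : margXZ p = push (margYZ p) (kprodL L).
  apply/ffunP => -[x z]; rewrite push_kprodLE markov_margXZ.
  by apply: eq_bigr => y _; rewrite mulrCA.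
apply: umlaut_push_kprodL => [y x|t|y].
- by rewrite /L divr_ge0 ?margY3_ge0 ?margXY_ge0.
- exact: margYZ_ge0.
- rewrite margL_margYZ => my; rewrite -mulr_suml.
  have <- : margR (margXY p) y = \sum_x margXY p (x, y) by rewrite ffunE.
  by rewrite margR_margXY divff ?gt_eqF.
Qed.

End Markov.

Lemma divr_gt0_or_den0 (R : realType) (a b : R) : 0 <= a -> 0 <= b ->
  (0 < a / b \/ b = 0) <-> (0 < b -> a != 0).
Proof.
move=> a0 b0; split=> [[ab _|-> b_gt0]|h].
- by apply: contraTneq ab => ->; rewrite mul0r ltxx.
- by move: b_gt0; rewrite ltxx.
have [->|bn0] := eqVneq b 0; [by right|left].
have bp : 0 < b by rewrite lt0r bn0.
by rewrite divr_gt0 // lt0r h.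
Qed.

Theorem mainTheorem10 (R : realType) :
  (forall (X Y : finType) (p : {ffun X * Y -> R}), is_dist p ->
     ((0 <= umlaut p)%E /\ (umlaut p = 0%E <-> p = prodd (margL p) (margR p)))
     /\
     ((umlaut p < +oo)%E <->
        exists y : Y, forall x : X,
          0 < p (x, y) / margL p x \/ margL p x = 0))
  /\
  (forall (X Y Z : finType) (p : {ffun X * Y * Z -> R}), is_dist p -> markov3 p ->
     (umlaut (margXZ p) <= umlaut (margXY p))%E /\
     (umlaut (margXZ p) <= umlaut (margYZ p))%E).
Proof.
split=> [X Y p p_dist | X Y Z p p_dist p_markov]; last first.
  by split; [exact: umlautXZ_le_XY | exact: umlautXZ_le_YZ].
split; first by split; [exact: umlaut_ge0 | exact: umlaut_eq0].
apply: (iff_trans (umlaut_lt_pinfty p_dist)).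
have cover y : [forall x, (0 < margL p x) ==> (p (x, y) != 0)] <->
    forall x, 0 < p (x, y) / margL p x \/ margL p x = 0.
  have iff_x x := divr_gt0_or_den0 (p_dist.1 (x, y)) ((is_dist_margL p_dist).1 x).
  split=> [/forallP h x|h]; first exact/(iff_x x).2/implyP/h.
  by apply/forallP => x; apply/implyP/(iff_x x).1/h.
by split=> -[y /cover]; exists y.
Qed.
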